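(* For every prime $p$ and every $k\ge 2$, $cw(\mathrm{Syl}_p(S_{p^k}))=1$. For every prime $p>2$ and every $k\ge 2$, $cw(\mathrm{Syl}_p(A_{p^k}))=1$.
   Context: $\mathrm{Syl}_p(G)$ denotes a Sylow $p$-subgroup of $G$; $S_n$ and $A_n$ are the symmetric and alternating groups. The commutator width $cw(G)$ is the maximum, over elements $g$ of the derived subgroup $G'$, of the least number of commutators whose product is $g$. *)

From mathcomp Require Import all_boot all_fingroup all_solvable.
Set Implicit Arguments. Unset Strict Implicit. Unset Printing Implicit Defensive.
Import GroupScope.

Definition prod_of_comms (gT : finGroupType) (G : {set gT}) (m : nat) (g : gT) : Prop :=
  exists s : seq (gT * gT),
    [/\ size s = m, all (fun c => (c.1 \in G) && (c.2 \in G)) s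
      & g = \prod_(c <- s) [~ c.1, c.2]].

Definition commutator_width_is (gT : finGroupType) (G : {set gT}) (n : nat) : Prop :=
  (forall g, g \in G^`(1) -> exists2 m, m <= n & prod_of_comms G m g) /\
  (exists2 g, g \in G^`(1) & forall m, m < n -> ~ prod_of_comms G m g).

(* A Sylow p-subgroup of S_(p^k) is the iterated wreath product
   P_k = P_(k-1) wr C_p, realised on 'I_p ^ k and transported to 'I_(p^k).
   In a wreath product B wr C_n every commutator has trivial top component and
   base coordinates whose product lies in B'.  Conversely, if that product is a
   commutator [u, v] of B, the base element is itself a single commutator [x, y],
   with x placing u on the last block and shifting, and y given by prefix
   products of the coordinates.  By induction every element of P_k' is a single
   commutator, and P_k is nonabelian for k >= 2, so cw(P_k) = 1.  For odd p the
   index 2 of A_(p^k) in S_(p^k) is prime to p, so both have the same Sylow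
   p-subgroups. *)

From mathcomp Require Import all_boot all_fingroup all_solvable.
From mathcomp Require Import ssralg zmodp.
Set Implicit Arguments. Unset Strict Implicit. Unset Printing Implicit Defensive.
Import GRing.Theory.

Definition comm_width_le1 (gT : finGroupType) (G : {set gT}) :=
  forall g, g \in (G^`(1))%g -> exists2 x, x \in G & exists2 y, y \in G & g = [~ x, y]%g.

Section CommWidth.
Local Open Scope group_scope.
Variables (gT rT : finGroupType).

Lemma comm_width_le1_isog (G : {group gT}) (H : {group rT}) :
  G \isog H -> comm_width_le1 G -> comm_width_le1 H.
Proof.
case/isogP => f _ <- cwG g; rewrite -morphim_der //.
case/morphimP=> x _ /cwG[u uG [v vG ->]] ->.
by exists (f u); rewrite ?mem_morphim //; exists (f v); rewrite ?mem_morphim ?morphR.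
Qed.

Lemma commutator_width_is1 (G : {group gT}) :
  comm_width_le1 G -> ~~ abelian G -> commutator_width_is G 1.
Proof.
move=> cwG nabG; split=> [g /cwG[x xG [y yG ->]] | ].
  by exists 1%N => //; exists [:: (x, y)]; rewrite /= xG yG big_seq1.
have /trivgPn[g G'g g1] : G^`(1) != 1 by apply: contra nabG => /eqP/derG1P.
exists g => // m; rewrite ltnS leqn0 => /eqP -> [s [/size0nil -> _ g_eq]].
by rewrite g_eq big_nil eqxx in g1.
Qed.

End CommWidth.

Section Abelianization.
Local Open Scope group_scope.
Variables (gT : finGroupType) (B : {group gT}).

Let abQ : abelian (B / B^`(1)) := sub_der1_abelian (subxx _).
Let nB : {subset B <= 'N(B^`(1))} := subsetP (der_norm 1 B).

Definition abel x := FiniteModule.fmod abQ (coset B^`(1) x).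

Lemma abelM x y : x \in B -> y \in B -> abel (x * y) = (abel x + abel y)%R.
Proof. by move=> xB yB; rewrite /abel morphM ?nB // FiniteModule.fmodM // mem_quotient. Qed.

Lemma abelV x : x \in B -> abel x^-1 = (- abel x)%R.
Proof. by move=> xB; rewrite /abel morphV ?nB // FiniteModule.fmodV. Qed.

Lemma abel_eq0 x : x \in B -> (abel x == 0%R) = (x \in B^`(1)).
Proof.
move=> xB; apply/eqP/idP => [abel_x0 | B'x]; last first.
  by rewrite /abel coset_id // FiniteModule.fmod1.
apply: coset_idr (nB xB) _.
by have := congr1 val abel_x0; rewrite /abel FiniteModule.fmodK ?mem_quotient.
Qed.

Lemma abel_prod (I : Type) (r : seq I) (F : I -> gT) :
  (forall i, F i \in B) -> abel (\prod_(i <- r) F i) = (\sum_(i <- r) abel (F i))%R.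
Proof.
move=> FB; suff [] : (\sum_(i <- r) abel (F i))%R = abel (\prod_(i <- r) F i)
                     /\ \prod_(i <- r) F i \in B by [].
apply: (big_ind2 (fun s x => s = abel x /\ x \in B)) => //.
  by rewrite /abel morph1 FiniteModule.fmod1.
by move=> _ x _ y [-> xB] [-> yB]; rewrite abelM ?groupM.
Qed.

End Abelianization.

Lemma ord_max_add1 m : (ord_max + 1 = 0 :> 'I_m.+2)%R.
Proof. by apply: val_inj; rewrite /= (@modn_small 1) // addn1 modnn. Qed.

Lemma val_add1 m (a : 'I_m.+2) : a != ord_max -> val (a + 1)%R = (val a).+1.
Proof.
move=> a_max; rewrite /= (@modn_small 1) // addn1 modn_small //.
by rewrite ltn_neqAle ltn_ord andbT eqSS; apply: contra a_max => /eqP a_last; apply/eqP/val_inj.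
Qed.

Section Wreath.
Variables (q : nat) (T : finType) (B : {group {perm T}}).
Local Open Scope group_scope.
Local Notation n := q.+2.
Local Notation Z := 'I_n.
Local Notation base := {dffun forall a : Z, {perm T}}.
Implicit Types (j : Z) (f g : base).

Definition shift j f : base := [ffun a : Z => f (a + j)%R].

Lemma shiftD j j' f : shift j (shift j' f) = shift (j + j')%R f.
Proof. by apply/ffunP => a; rewrite !ffunE addrA. Qed.

Lemma shift0 f : shift 0%R f = f.
Proof. by apply/ffunP => a; rewrite !ffunE addr0. Qed.

Definition wr_fun j f (x : Z * T) : Z * T := ((x.1 + j)%R, f x.1 x.2).

Lemma wr_fun_inj j f : injective (wr_fun j f).
Proof.
move=> [a t] [b u] E; have /addIr /= ab := congr1 fst E.
by move: E; rewrite /wr_fun /= ab => -[/perm_inj ->].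
Qed.

Definition wr j f : {perm Z * T} := perm (@wr_fun_inj j f).

Lemma wrE j f a t : wr j f (a, t) = ((a + j)%R, f a t).
Proof. by rewrite permE. Qed.

Lemma wrM j j' f g : wr j f * wr j' g = wr (j + j')%R (f * shift j g).
Proof. by apply/permP => -[a t]; rewrite permM !wrE !ffunE permM addrA. Qed.

Lemma wr1 : wr 0%R 1 = 1.
Proof. by apply/permP => -[a t]; rewrite wrE !ffunE addr0 !perm1. Qed.

Lemma wrV j f : (wr j f)^-1 = wr (- j)%R (shift (- j)%R f^-1).
Proof.
by apply/eqP; rewrite eq_invg_mul wrM shiftD subrr shift0 mulgV wr1.
Qed.

Lemma wr_inj (t0 : T) : injective (uncurry wr).
Proof.
move=> [j f] [j' g] /= E.
have wrE_at a t := congr1 (fun s : {perm Z * T} => s (a, t)) E.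
have := wrE_at 0%R t0; rewrite /= !wrE !add0r => -[<- _].
congr pair; apply/ffunP => a; apply/permP => t.
by have := wrE_at a t; rewrite /= !wrE => -[].
Qed.

Local Notation Bn := (setXn (fun _ : Z => B)).

Lemma shift_base j f : f \in Bn -> shift j f \in Bn.
Proof. by move=> /setXnP fB; apply/setXnP => a; rewrite ffunE. Qed.

Definition wreath := [set wr j f | j in [set: Z], f in Bn].

Lemma wreath_group_set : group_set wreath.
Proof.
apply/group_setP; split; first by rewrite -wr1 imset2_f ?in_setT ?group1.
move=> _ _ /imset2P[j f _ fB ->] /imset2P[j' g _ gB ->].
by rewrite wrM imset2_f ?in_setT ?groupM ?shift_base.
Qed.

Canonical wreath_group := Group wreath_group_set.

Lemma card_wreath (t0 : T) : #|wreath| = (n * #|B| ^ n)%N.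
Proof.
rewrite /wreath curry_imset2X card_imset; last exact: wr_inj t0.
by rewrite cardsX cardsT card_ord cardsXn prod_nat_const card_ord.
Qed.

Definition abel_sum f := (\sum_(a : Z) abel B (f a))%R.

Lemma abel_sumM f g : f \in Bn -> g \in Bn -> abel_sum (f * g) = (abel_sum f + abel_sum g)%R.
Proof.
move=> /setXnP fB /setXnP gB; rewrite -big_split; apply: eq_bigr => a _.
by rewrite mulg_ffun abelM.
Qed.

Lemma abel_sumV f : f \in Bn -> abel_sum f^-1 = (- abel_sum f)%R.
Proof.
by move=> /setXnP fB; rewrite -sumrN; apply: eq_bigr => a _; rewrite invg_ffun abelV.
Qed.

Lemma abel_sum_shift j f : abel_sum (shift j f) = abel_sum f.
Proof.
rewrite /abel_sum [RHS](reindex_inj (addIr j)); apply: eq_bigr => a _.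
by rewrite ffunE.
Qed.

(* The fibres of wr j f |-> (j, abel_sum f), a morphism from the wreath product
   to the abelian group Z * B/B'; it is handled through its fibres because
   recovering (j, f) from wr j f needs T to be inhabited. *)
Definition wr_fiber j s := wr j @: [set f in Bn | abel_sum f == s].

Lemma wr_fiberM j j' s s' x y : x \in wr_fiber j s -> y \in wr_fiber j' s' ->
  x * y \in wr_fiber (j + j')%R (s + s')%R.
Proof.
move=> /imsetP[f /setIdP[fB /eqP <-] ->] /imsetP[g /setIdP[gB /eqP <-] ->].
rewrite wrM imset_f //; apply/setIdP; split; first by rewrite groupM ?shift_base.
by rewrite abel_sumM ?shift_base // abel_sum_shift.
Qed.

Lemma wr_fiberV j s x : x \in wr_fiber j s -> x^-1 \in wr_fiber (- j)%R (- s)%R.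
Proof.
move=> /imsetP[f /setIdP[fB /eqP <-] ->].
rewrite wrV imset_f //; apply/setIdP; split; first by rewrite shift_base ?groupV.
by rewrite abel_sum_shift abel_sumV.
Qed.

Lemma wreath_fiber x : x \in wreath -> exists j s, x \in wr_fiber j s.
Proof.
by move=> /imset2P[j f _ fB ->]; exists j, (abel_sum f); rewrite imset_f //; apply/setIdP.
Qed.

Definition wr_kernel := wr_fiber 0%R 0%R.

Lemma wr_kernel_group_set : group_set wr_kernel.
Proof.
apply/group_setP; split.
  rewrite -wr1 imset_f //; apply/setIdP; split=> //.
  by rewrite /abel_sum big1 // => a _; apply/eqP; rewrite oneg_ffun abel_eq0.
by move=> x y xK yK; have := wr_fiberM xK yK; rewrite !addr0.
Qed.

Canonical wr_kernel_group := Group wr_kernel_group_set.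

Lemma commg_wr_kernel x y : x \in wreath -> y \in wreath -> [~ x, y] \in wr_kernel.
Proof.
move=> /wreath_fiber[j [s xF]] /wreath_fiber[j' [s' yF]].
(* [~ x, y] = x^-1 * (y^-1 * x * y) lies in the fibre over -j + (-j' + j + j') *)
have := wr_fiberM (wr_fiberV xF) (wr_fiberM (wr_fiberM (wr_fiberV yF) xF) yF).
by rewrite -mulgA -conjgE -commgEl !(addrC (- _)%R) !subrK !subrr.
Qed.

Lemma der1_wreath_kernel : wreath^`(1) \subset wr_kernel.
Proof.
by rewrite derg1 gen_subG; apply/subsetP => _ /imset2P[x y xW yW ->]; apply: commg_wr_kernel.
Qed.

Lemma wr_commg_base f u v : f \in Bn -> u \in B -> v \in B ->
  \prod_(a : Z) f a = [~ u, v] ->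
  exists2 x, x \in wreath & exists2 y, y \in wreath & wr 0%R f = [~ x, y].
Proof.
move=> /setXnP fB uB vB prod_f.
pose P (a : Z) := \prod_(i < (val a).+1) f (inord i).
have P0 : P 0%R = f 0%R.
  by rewrite /P big_ord1 (_ : inord 0 = 0%R) //; apply: val_inj; rewrite /= inordK.
have P_last : P ord_max = [~ u, v].
  by rewrite -prod_f /P; apply: eq_bigr => a _; rewrite inord_val.
have P_succ a : a != ord_max -> P (a + 1)%R = P a * f (a + 1)%R.
  move=> a_max; rewrite /P val_add1 // big_ord_recr /=; congr (_ * f _).
  by apply: val_inj; rewrite /= inordK -val_add1 ?ltn_ord.
(* x = wr 1 alpha and y = wr 0 beta satisfy x * y = y * x * wr 0 f: blockwise this
   is the recurrence beta (a + 1) = beta a * f (a + 1), solved by prefix products,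
   and its wrap-around at ord_max holds because the full product is [~ u, v]. *)
pose alpha : base := [ffun a => if a == ord_max then u else 1].
pose beta : base := [ffun a => v * [~ u, v]^-1 * P a].
have alphaB : alpha \in Bn by apply/setXnP => a; rewrite ffunE; case: ifP.
have betaB : beta \in Bn.
  by apply/setXnP => a; rewrite ffunE !groupM ?groupV ?groupR // group_prod.
have comm_xy : wr 1%R alpha * wr 0%R beta = wr 0%R beta * wr 1%R alpha * wr 0%R f.
  rewrite !wrM add0r !addr0 shift0; congr wr; apply/ffunP => a; rewrite !ffunE.
  have [-> | a_max] := eqVneq a ord_max.
    rewrite ord_max_add1 P0 P_last mulgKV -[v * u](mulgK [~ u, v]) -commgC.
    by rewrite !mulgA.
  by rewrite P_succ // !mulg1 mul1g !mulgA.
exists (wr 1%R alpha); first exact: imset2_f.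
exists (wr 0%R beta); first exact: imset2_f.
by apply: (mulgI (wr 0%R beta * wr 1%R alpha)); rewrite -commgC comm_xy.
Qed.

Lemma comm_width_le1_wreath : comm_width_le1 B -> comm_width_le1 wreath.
Proof.
move=> cwB g /(subsetP der1_wreath_kernel) /imsetP[f /setIdP[fB]]; have /setXnP fB' := fB.
have prodB : \prod_(a : Z) f a \in B by apply: group_prod.
have -> : abel_sum f = abel B (\prod_(a : Z) f a) by rewrite abel_prod.
rewrite abel_eq0 // => /cwB[u uB [v vB prod_f]] ->.
exact: wr_commg_base prod_f.
Qed.

Lemma wreath_nonabelian (t0 : T) : B :!=: 1 -> ~~ abelian wreath.
Proof.
case/trivgPn => b bB b1.
pose delta : base := [ffun a : Z => if a == 0%R then b else 1].
have deltaB : delta \in Bn by apply/setXnP => a; rewrite ffunE; case: ifP.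
have xW : wr 1%R 1 \in wreath by rewrite imset2_f ?in_setT ?group1.
have yW : wr 0%R delta \in wreath by rewrite imset2_f ?in_setT.
apply/negP => /centsP/(_ _ xW _ yW).
rewrite /commute !wrM add0r addr0 shift0 => /(@wr_inj t0 (_, _) (_, _)) [] /ffunP /(_ 0%R).
by rewrite !ffunE add0r mul1g mulg1 => /esym/eqP; apply/negP.
Qed.

End Wreath.

Section IteratedWreath.
Local Open Scope group_scope.
Variable q : nat.
Local Notation n := q.+2.

Fixpoint iter_wr_dom k : finType :=
  if k is k'.+1 then ('I_n * iter_wr_dom k')%type else unit.

Fixpoint iter_wr k : {group {perm iter_wr_dom k}} :=
  match k with
  | 0 => 1%G
  | k'.+1 => wreath_group q (iter_wr k')
  end.

Lemma card_iter_wr_dom k : #|iter_wr_dom k| = (n ^ k)%N.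
Proof.
elim: k => [|k IHk] /=; first by rewrite card_unit.
by rewrite card_prod card_ord IHk expnS.
Qed.

Lemma card_iter_wr k : #|iter_wr k| = (n ^ (\sum_(i < k) n ^ i))%N.
Proof.
elim: k => [|k IHk] /=; first by rewrite cards1 big_ord0.
have /card_gt0P[t0 _] : 0 < #|iter_wr_dom k| by rewrite card_iter_wr_dom expn_gt0.
rewrite (card_wreath _ _ t0) IHk big_ord_recl expn0 -expnM expnS big_distrl.
by congr (_ * _ ^ _)%N; apply: eq_bigr => i _; rewrite lift0 expnSr.
Qed.

Lemma comm_width_le1_iter_wr k : comm_width_le1 (iter_wr k).
Proof.
elim: k => [|k IHk] /=; last exact: comm_width_le1_wreath.
move=> g; rewrite derg1 commG1 => /set1P ->.
by exists 1; rewrite ?group1 //; exists 1; rewrite ?group1 ?comm1g.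
Qed.

Lemma iter_wr_nonabelian k : 1 < k -> ~~ abelian (iter_wr k).
Proof.
case: k => // k k_gt0 /=.
have /card_gt0P[t0 _] : 0 < #|iter_wr_dom k| by rewrite card_iter_wr_dom expn_gt0.
apply: wreath_nonabelian t0 _; rewrite trivg_card1 card_iter_wr.
by case: k k_gt0 => // k _; rewrite big_ord_recl expn0 expnS muln_eq1.
Qed.

End IteratedWreath.

Section Relabel.
Local Open Scope group_scope.
Variables (T : finType) (m : nat).
Hypothesis cardT : #|T| = m.

Let e (t : T) : 'I_m := cast_ord cardT (enum_rank t).
Let e' (i : 'I_m) : T := enum_val (cast_ord (esym cardT) i).
Let eK : cancel e e'. Proof. by move=> t; rewrite /e /e' cast_ordK enum_rankK. Qed.
Let e'K : cancel e' e. Proof. by move=> i; rewrite /e /e' enum_valK cast_ordKV. Qed.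

Fact relabel_fun_inj (s : {perm T}) : injective (e \o s \o e').
Proof. exact: inj_comp (inj_comp (can_inj eK) (@perm_inj _ s)) (can_inj e'K). Qed.

Definition relabel (s : {perm T}) : 'S_m := perm (@relabel_fun_inj s).

Lemma relabelM : {morph relabel : s t / s * t}.
Proof. by move=> s t; apply/permP => i; rewrite permM !permE /= permM eK. Qed.

Canonical relabel_morphism := @Morphism _ _ setT relabel (in2W relabelM).

Lemma injm_relabel : 'injm relabel_morphism.
Proof.
apply/injmP => s t _ _ /= /permP eq_st; apply/permP => x.
by have := eq_st (e x); rewrite !permE /= eK => /(can_inj eK).
Qed.

Lemma isog_relabel (G : {group {perm T}}) : G \isog relabel_morphism @* G.
Proof. exact: sub_isog (subsetT G) injm_relabel. Qed.

End Relabel.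

Lemma logn_fact_expn p k : prime p -> logn p (p ^ k)`! = \sum_(i < k) p ^ i.
Proof.
move=> p_pr; have p_gt1 := prime_gt1 p_pr; have p_gt0 := prime_gt0 p_pr.
rewrite logn_fact // (@big_cat_nat _ _ _ k.+1) //=; last by rewrite ltnS ltnW // ltn_expl.
rewrite [X in _ + X](_ : _ = 0) ?addn0; last first.
  rewrite big_nat_cond big1 // => j /andP[/andP[kj _] _].
  by rewrite divn_small // ltn_exp2l.
rewrite big_add1 /= -(big_mkord xpredT) big_nat_rev /=.
apply: eq_big_nat => i /andP[_ ik].
by rewrite add0n subnSK // -expnB ?leq_subr // subKn // ltnW.
Qed.

Lemma Sylow_Alt_Sym (T : finType) p (P : {group {perm T}}) :
  1 < #|T| -> p != 2 -> (p.-Sylow('Alt_T) P -> p.-Sylow('Sym_T) P)%g.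
Proof.
move=> T_gt1 p_neq2; rewrite !pHallE subsetT /= => /andP[_ /eqP ->].
rewrite card_Sym -card_Alt // partnM ?cardG_gt0 // (@part_p'nat _ 2) ?mul1n //.
by rewrite pnatE // inE /= inE eq_sym.
Qed.

Lemma iter_wr_isog_Sylow q k (P : {group 'S_(q.+2 ^ k)}) :
  prime q.+2 -> ((q.+2).-Sylow('Sym_('I_(q.+2 ^ k))) P -> iter_wr q k \isog P)%g.
Proof.
move=> p_pr sylP; pose H := (relabel_morphism (card_iter_wr_dom q k) @* iter_wr q k)%G.
have iso : iter_wr q k \isog H by apply: isog_relabel.
have sylH : ((q.+2).-Sylow('Sym_('I_(q.+2 ^ k))) H)%g.
  rewrite pHallE subsetT /= -(card_isog iso) card_iter_wr card_Sym card_ord.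
  by rewrite p_part logn_fact_expn.
have [x _ ->] := Sylow_trans sylH sylP.
exact: isog_trans iso (conj_isog _ _).
Qed.

Lemma Sylow_Sym_comm_width p k (P : {group 'S_(p ^ k)}) : prime p -> 1 < k ->
  (p.-Sylow('Sym_('I_(p ^ k))) P)%g -> commutator_width_is P 1.
Proof.
case: p P => [|[|q]] P p_pr // k_gt1 sylP; have iso := iter_wr_isog_Sylow p_pr sylP.
apply: commutator_width_is1; first exact: comm_width_le1_isog iso (@comm_width_le1_iter_wr q k).
by rewrite -(isog_abelian iso) iter_wr_nonabelian.
Qed.

Theorem mainTheorem8 :
  (forall (p k : nat), prime p -> 2 <= k ->
     forall P : {group 'S_(p ^ k)}, (p.-Sylow('Sym_('I_(p ^ k))) P)%g ->
       commutator_width_is P 1) /\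
  (forall (p k : nat), prime p -> 2 < p -> 2 <= k ->
     forall P : {group 'S_(p ^ k)}, (p.-Sylow('Alt_('I_(p ^ k))) P)%g ->
       commutator_width_is P 1).
Proof.
split=> [p k p_pr k_gt1 P | p k p_pr p_gt2 k_gt1 P sylP]; first exact: Sylow_Sym_comm_width.
apply: Sylow_Sym_comm_width => //; apply: Sylow_Alt_Sym sylP; last by rewrite gtn_eqF.
by rewrite card_ord -{1}(expn0 p) ltn_exp2l ?prime_gt1 // ltnW.
Qed.
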